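(* Let $A=\begin{bmatrix}a&b\\c&d\end{bmatrix}$ be a real $2\times 2$ matrix. Then: (1) $a$ is an interior L-eigenvalue of $A$ if and only if $b=0$ and either $a=d$ or $|a-d|<|c|$; (2) a real number $\lambda\neq a$ is an interior L-eigenvalue of $A$ if and only if $\lambda$ is a (real) root of $t^2-(a+d)t+(ad-bc)$, i.e. $\lambda\in\{\frac{a+d\pm\sqrt{(a-d)^2+4bc}}{2}\}\subseteq\mathbb{R}$, and $|b|<|a-\lambda|$; (3) $\lambda$ is a boundary L-eigenvalue of $A$ if and only if one of the following holds: (a) $\lambda=\frac{(a+d)+(b+c)}{2}$ and $a-d\le c-b$; (b) $\lambda=\frac{(a+d)-(b+c)}{2}$ and $a-d\le b-c$.
   Context: The Lorentz cone in $\mathbb{R}^2$ is $\mathcal{K}=\{(x_1,x_2)^T:\ |x_1|\le x_2\}$. For a real $2\times2$ matrix $A$, a real $\lambda$ is an L-eigenvalue of $A$ if there is a nonzero $x\in\mathcal{K}$ with $(A-\lambda I)x\in\mathcal{K}$ and $x^T(A-\lambda I)x=0$ ($x$ is an associated L-eigenvector). $\lambda$ is an interior L-eigenvalue if it has an associated L-eigenvector in the interior of $\mathcal{K}$, and a boundary L-eigenvalue if it has an associated L-eigenvector on the boundary of $\mathcal{K}$. *)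

From Stdlib Require Import Reals.
Open Scope R_scope.

(* Lorentz cone in R^2: { (x1,x2) | |x1| <= x2 } *)
Definition inK (x1 x2 : R) : Prop := Rabs x1 <= x2.
Definition inIntK (x1 x2 : R) : Prop := Rabs x1 < x2.
Definition inBdK (x1 x2 : R) : Prop := Rabs x1 = x2.

(* A = [[a, b], [c, d]] ; x = (x1, x2)^T.
   (A - l I) x = ((a - l) x1 + b x2, c x1 + (d - l) x2). *)
Definition L_eigvec (a b c d l x1 x2 : R) : Prop :=
  (x1 <> 0 \/ x2 <> 0) /\
  inK x1 x2 /\
  inK ((a - l) * x1 + b * x2) (c * x1 + (d - l) * x2) /\
  x1 * ((a - l) * x1 + b * x2) + x2 * (c * x1 + (d - l) * x2) = 0.

Definition interior_L_eigenvalue (a b c d l : R) : Prop :=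
  exists x1 x2, L_eigvec a b c d l x1 x2 /\ inIntK x1 x2.

Definition boundary_L_eigenvalue (a b c d l : R) : Prop :=
  exists x1 x2, L_eigvec a b c d l x1 x2 /\ inBdK x1 x2.

(* An interior L-eigenvector x is orthogonal to (A - l I) x, which lies in the
   Lorentz cone; since the cone is self-dual and x is interior, (A - l I) x must
   vanish, so interior L-eigenvalues are ordinary eigenvalues whose eigenvector
   can be normalised to (t, 1) with |t| < 1.  A boundary L-eigenvector is a
   positive multiple of (1, 1) or (-1, 1); the two rays are exchanged by the
   reflection diag(-1, 1), which preserves the cone, and on the ray (1, 1) the
   complementarity and cone conditions reduce to one linear equation and one
   linear inequality in l. *)

From Stdlib Require Import Reals Lra.
Open Scope R_scope.

Lemma Rabs_le_inv y m : Rabs y <= m -> - m <= y <= m.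
Proof.
  intros H. pose proof (Rle_abs y). pose proof (Rle_abs (- y)).
  rewrite Rabs_Ropp in *. lra.
Qed.

Lemma Rabs_lt_1_of_mul p t e :
  p <> 0 -> p * t = e -> (Rabs t < 1 <-> Rabs e < Rabs p).
Proof.
  intros Hp <-. rewrite Rabs_mult.
  pose proof (Rabs_pos_lt p Hp). pose proof (Rabs_pos t).
  split; intro; nra.
Qed.

Lemma exists_small_solution c e :
  (exists t, Rabs t < 1 /\ c * t = e) <-> e = 0 \/ Rabs e < Rabs c.
Proof.
  split.
  - intros [t [Ht Hct]]. destruct (Req_dec c 0) as [->|Hc].
    + left. lra.
    + right. exact (proj1 (Rabs_lt_1_of_mul c t e Hc Hct) Ht).
  - intros [-> | He].
    + exists 0. rewrite Rabs_R0. split; [lra | ring].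
    + assert (Hc : c <> 0).
      { intros ->. rewrite Rabs_R0 in He. pose proof (Rabs_pos e). lra. }
      exists (e / c). split.
      * rewrite (Rabs_lt_1_of_mul c _ e Hc) by (field; exact Hc). exact He.
      * field. exact Hc.
Qed.

Lemma exists_small_common_root p q b c :
  p <> 0 ->
  (exists t, Rabs t < 1 /\ p * t + b = 0 /\ c * t + q = 0) <->
  p * q - b * c = 0 /\ Rabs b < Rabs p.
Proof.
  intros Hp. split.
  - intros [t [Ht [H1 H2]]]. split.
    + replace (p * q - b * c) with (p * (c * t + q) - c * (p * t + b)) by ring.
      rewrite H1, H2. ring.
    + rewrite <- Rabs_Ropp, <- (Rabs_lt_1_of_mul p t (- b) Hp) by lra. exact Ht.
  - intros [Hdet Hb]. exists (- b / p). split; [|split].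
    + rewrite (Rabs_lt_1_of_mul p _ (- b) Hp) by (field; exact Hp).
      rewrite Rabs_Ropp. exact Hb.
    + field. exact Hp.
    + replace (c * (- b / p) + q) with ((p * q - b * c) / p) by (field; exact Hp).
      rewrite Hdet. unfold Rdiv. ring.
Qed.

Lemma orthogonal_interior_Lorentz x1 x2 y1 y2 :
  inIntK x1 x2 -> inK y1 y2 -> x1 * y1 + x2 * y2 = 0 -> y1 = 0 /\ y2 = 0.
Proof.
  unfold inIntK, inK. intros Hx Hy Horth.
  apply Rabs_def2 in Hx as [Hx Hx']. apply Rabs_le_inv in Hy as [Hy Hy'].
  (* Both products are nonnegative and sum to 2 (x1 y1 + x2 y2). *)
  assert (Hsum : (x2 - x1) * (y2 - y1) + (x2 + x1) * (y2 + y1) = 0) by nra.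
  assert (y2 - y1 = 0 /\ y2 + y1 = 0) by (split; nra).
  split; lra.
Qed.

Lemma interior_L_eigenvalue_iff a b c d l :
  interior_L_eigenvalue a b c d l <->
  exists t, Rabs t < 1 /\ (a - l) * t + b = 0 /\ c * t + (d - l) = 0.
Proof.
  split.
  - intros [x1 [x2 [[_ [_ [Hy Horth]]] Hx]]].
    destruct (orthogonal_interior_Lorentz _ _ _ _ Hx Hy Horth) as [H1 H2].
    assert (Hx2 : 0 < x2) by (pose proof (Rabs_pos x1); unfold inIntK in Hx; lra).
    exists (x1 / x2). split; [|split].
    + rewrite (Rabs_lt_1_of_mul x2 _ x1) by (try field; lra).
      rewrite (Rabs_pos_eq x2) by lra. exact Hx.
    + replace ((a - l) * (x1 / x2) + b) with (((a - l) * x1 + b * x2) / x2)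
        by (field; lra).
      rewrite H1. unfold Rdiv. ring.
    + replace (c * (x1 / x2) + (d - l)) with ((c * x1 + (d - l) * x2) / x2)
        by (field; lra).
      rewrite H2. unfold Rdiv. ring.
  - intros [t [Ht [H1 H2]]]. exists t, 1.
    unfold L_eigvec, inK, inIntK.
    rewrite !Rmult_1_r, H1, H2, Rabs_R0.
    repeat split; lra.
Qed.

Lemma interior_L_eigenvalue_at_diagonal_entry a b c d :
  interior_L_eigenvalue a b c d a <->
  b = 0 /\ exists t, Rabs t < 1 /\ c * t = a - d.
Proof.
  rewrite interior_L_eigenvalue_iff. split.
  - intros [t [Ht [H1 H2]]]. split; [lra|]. exists t. split; [exact Ht | lra].
  - intros [Hb [t [Ht Hct]]]. exists t. split; [exact Ht | split; lra].
Qed.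

Lemma inK_scale s u v : 0 < s -> inK (s * u) (s * v) <-> inK u v.
Proof.
  unfold inK. intros Hs. rewrite Rabs_mult, (Rabs_pos_eq s) by lra.
  split; intro; nra.
Qed.

Lemma L_eigvec_scale a b c d l s x1 x2 :
  0 < s -> L_eigvec a b c d l (s * x1) (s * x2) <-> L_eigvec a b c d l x1 x2.
Proof.
  intros Hs. unfold L_eigvec.
  replace ((a - l) * (s * x1) + b * (s * x2)) with (s * ((a - l) * x1 + b * x2)) by ring.
  replace (c * (s * x1) + (d - l) * (s * x2)) with (s * (c * x1 + (d - l) * x2)) by ring.
  rewrite !inK_scale by exact Hs.
  set (q := x1 * ((a - l) * x1 + b * x2) + x2 * (c * x1 + (d - l) * x2)).
  replace (s * x1 * (s * ((a - l) * x1 + b * x2)) + s * x2 * (s * (c * x1 + (d - l) * x2)))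
    with (s * s * q) by (unfold q; ring).
  assert (Hss : 0 < s * s) by nra.
  split; intros [Hnz [Hx [Hy Hq]]]; repeat split; try assumption.
  - destruct Hnz as [H|H]; [left|right]; intros E; apply H; rewrite E; ring.
  - nra.
  - destruct Hnz as [H|H]; [left|right]; nra.
  - rewrite Hq. ring.
Qed.

Lemma L_eigvec_reflect a b c d l x1 x2 :
  L_eigvec a b c d l (- x1) x2 <-> L_eigvec a (- b) (- c) d l x1 x2.
Proof.
  unfold L_eigvec, inK.
  replace ((a - l) * - x1 + b * x2) with (- ((a - l) * x1 + - b * x2)) by ring.
  replace (c * - x1 + (d - l) * x2) with (- c * x1 + (d - l) * x2) by ring.
  replace (- x1 * - ((a - l) * x1 + - b * x2)) with (x1 * ((a - l) * x1 + - b * x2)) by ring.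
  rewrite !Rabs_Ropp.
  split; intros [Hnz Hrest]; split; try exact Hrest;
    destruct Hnz as [H|H]; [left|right|left|right]; lra.
Qed.

Lemma boundary_L_eigenvalue_iff a b c d l :
  boundary_L_eigenvalue a b c d l <->
  L_eigvec a b c d l 1 1 \/ L_eigvec a (- b) (- c) d l 1 1.
Proof.
  split.
  - intros [x1 [x2 [Hev Hbd]]]. unfold inBdK in Hbd.
    assert (Hx2 : 0 < x2).
    { destruct Hev as [[H|H] _]; pose proof (Rabs_pos x1);
        [pose proof (Rabs_pos_lt x1 H) |]; lra. }
    destruct (Rle_dec 0 x1) as [Hx1|Hx1].
    + rewrite Rabs_pos_eq in Hbd by exact Hx1.
      left. apply (L_eigvec_scale _ _ _ _ _ x2); [exact Hx2|].
      rewrite Rmult_1_r. subst x1. exact Hev.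
    + rewrite Rabs_left in Hbd by lra.
      right. apply L_eigvec_reflect, (L_eigvec_scale _ _ _ _ _ x2); [exact Hx2|].
      rewrite Rmult_1_r, <- Ropp_mult_distr_r, Rmult_1_r.
      replace (- x2) with x1 by lra. exact Hev.
  - intros [H|H]; [exists 1, 1 | exists (- 1), 1].
    + split; [exact H | apply Rabs_R1].
    + split; [apply L_eigvec_reflect, H |].
      unfold inBdK. rewrite Rabs_left1; lra.
Qed.

Lemma L_eigvec_diagonal_ray a b c d l :
  L_eigvec a b c d l 1 1 <-> l = ((a + d) + (b + c)) / 2 /\ a - d <= c - b.
Proof.
  unfold L_eigvec, inK. rewrite Rabs_R1, !Rmult_1_r, !Rmult_1_l.
  split.
  - intros [_ [_ [Hy Horth]]]. pose proof (Rle_abs (a - l + b)). split; lra.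
  - intros [Hl Hab]. rewrite Rabs_left1 by lra. repeat split; lra.
Qed.

Theorem theorem3p1 (a b c d : R) :
  (interior_L_eigenvalue a b c d a <->
     b = 0 /\ (a = d \/ Rabs (a - d) < Rabs c)) /\
  (forall l : R, l <> a ->
     (interior_L_eigenvalue a b c d l <->
        l * l - (a + d) * l + (a * d - b * c) = 0 /\ Rabs b < Rabs (a - l))) /\
  (forall l : R,
     boundary_L_eigenvalue a b c d l <->
       (l = ((a + d) + (b + c)) / 2 /\ a - d <= c - b) \/
       (l = ((a + d) - (b + c)) / 2 /\ a - d <= b - c)).
Proof.
  split; [|split].
  - rewrite interior_L_eigenvalue_at_diagonal_entry, exists_small_solution.
    split; intros [Hb [E|E]]; (split; [exact Hb|]); [left|right|left|right]; lra.
  - intros l Hl.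
    rewrite interior_L_eigenvalue_iff, exists_small_common_root by lra.
    replace (l * l - (a + d) * l + (a * d - b * c)) with ((a - l) * (d - l) - b * c)
      by ring.
    reflexivity.
  - intros l.
    rewrite boundary_L_eigenvalue_iff, !L_eigvec_diagonal_ray.
    split; intros [[Hl H]|[Hl H]]; [left|right|left|right]; split; lra.
Qed.
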